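(* For integers $i,j\ge1$ with $i\neq j$, the central element $m_{i,i,j}=m_{i,i,j}(L_1,\dots,L_4)\in\mathbb Z S_4$ satisfies \begin{align*} \langle 1,m_{i,i,j}\rangle&=\tfrac{1}{24}(1+(-1)^j)\big(6^i+2^i3^j+2^j3^i+9(-1)^i(2^i+2^j)+9\cdot 2^i\big),\\ \langle s_1,m_{i,i,j}\rangle&=\tfrac{1}{24}(1-(-1)^j)\big(6^i+2^i3^j+2^j3^i+3(-1)^i(2^i+2^j)-3\cdot 2^i\big),\\ \langle s_{12},m_{i,i,j}\rangle&=\tfrac{1}{24}(1+(-1)^j)\big(6^i+2^i3^j+2^j3^i\big),\\ \langle s_{13},m_{i,i,j}\rangle&=\tfrac{1}{24}(1+(-1)^j)\big(6^i+2^i3^j+2^j3^i-3(-1)^i(2^i+2^j)-3\cdot 2^i\big),\\ \langle s_{123},m_{i,i,j}\rangle&=\tfrac{1}{24}(1-(-1)^j)\big(6^i+2^i3^j+2^j3^i-3(-1)^i(2^i+2^j)+3\cdot 2^i\big). \end{align*}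
   Context: $S_4$ is the symmetric group on $\{1,2,3,4\}$, $\mathbb Z S_4$ its integral group ring. Let $s_1=(1\,2)$, $s_2=(2\,3)$, $s_3=(3\,4)$, $s_{12}=s_1s_2$, $s_{13}=s_1s_3$, $s_{123}=s_1s_2s_3$. The Jucys–Murphy elements are $L_1=0$ and $L_i=\sum_{k=1}^{i-1}(k\ i)$ for $i=2,3,4$; they pairwise commute. For a partition $\mu=(\mu_1,\dots,\mu_r)$, $m_\mu(x_1,\dots,x_4)$ is the monomial symmetric polynomial: the sum of all distinct monomials $x_1^{\alpha_1}\cdots x_4^{\alpha_4}$ with $(\alpha_1,\dots,\alpha_4)$ a rearrangement of $(\mu_1,\dots,\mu_r,0,\dots,0)$. A subscript list such as $m_{i,i,j}$ denotes $m_\mu(L_1,\dots,L_4)$ where $\mu$ is the partition whose parts are the listed entries (sorted decreasingly). For $w\in S_4$ and $h\in\mathbb Z S_4$, $\langle w,h\rangle$ denotes the coefficient of $w$ in $h$; for central $h$ this equals the coefficient of the class sum of the conjugacy class of $w$. *)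

(* The integral group ring Z S_4 is modelled as the type of
   all functions {perm 'I_4} -> int (coefficient functions); the point
   {1,2,3,4} is encoded as 'I_4 = {0,1,2,3} (k+1 <-> k). *)
From HB Require Import structures.
From mathcomp Require Import all_boot all_order all_algebra all_fingroup.
Set Implicit Arguments. Unset Strict Implicit. Unset Printing Implicit Defensive.
Import GRing.Theory Num.Theory.
Local Open Scope ring_scope.

Definition S4 := {perm 'I_4}.
Definition ZS4 := S4 -> int.

Definition gdelta (w : S4) : ZS4 := fun g => (g == w)%:R.
Definition gone : ZS4 := gdelta 1%g.
Definition gadd (a b : ZS4) : ZS4 := fun g => a g + b g.
Definition gmul (a b : ZS4) : ZS4 := fun g => \sum_(h : S4) a h * b (h^-1 * g)%g.
Definition gpow (a : ZS4) (n : nat) : ZS4 := iter n (gmul a) gone.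

(* Jucys-Murphy elements: L_(k+1) = sum_{l < k} (l k)  (transpositions) *)
Definition JM (k : 'I_4) : ZS4 :=
  fun g => \sum_(l < 4 | (l < k)%N) gdelta (tperm l k) g.

Definition JMmono (a : 'I_4 -> nat) : ZS4 :=
  gmul (gpow (JM (inord 0)) (a (inord 0)))
   (gmul (gpow (JM (inord 1)) (a (inord 1)))
    (gmul (gpow (JM (inord 2)) (a (inord 2)))
           (gpow (JM (inord 3)) (a (inord 3))))).

(* monomial symmetric polynomial m_mu(L_1,..,L_4) for a list mu of (positive)
   parts of length <= 4: sum over all DISTINCT exponent vectors that are
   rearrangements of mu padded with zeros. Exponent vectors are enumerated
   (each exactly once) as finite functions into 'I_(N+1), N bounding the parts. *)
Definition msym (mu : seq nat) : ZS4 :=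
  let N := foldr maxn 0%N mu in
  fun g => \sum_(a : {ffun 'I_4 -> 'I_N.+1}
               | perm_eq [seq (val (a k)) | k <- enum 'I_4]
                         (mu ++ nseq (4 - size mu) 0%N))
             JMmono (fun k => val (a k)) g.

Definition coef (w : S4) (h : ZS4) : int := h w.

Definition s1 : S4 := tperm (inord 0 : 'I_4) (inord 1).
Definition s2 : S4 := tperm (inord 1 : 'I_4) (inord 2).
Definition s3 : S4 := tperm (inord 2 : 'I_4) (inord 3).
Definition s12 : S4 := (s1 * s2)%g.
Definition s13 : S4 := (s1 * s3)%g.
Definition s123 : S4 := (s1 * s2 * s3)%g.

(* Strategy.
   1. Since L_1 = 0, only exponent vectors with first entry 0 contribute, so
      m_{i,i,j} = F(i,i,j) + F(i,j,i) + F(j,i,i) where F(a,b,c) = L_2^a L_3^b L_4^c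
      (msym_iij).
   2. The Jucys-Murphy elements satisfy L_2^2 = 1, L_3^4 = 5 L_3^2 - 4 and
      L_4^7 = 14 L_4^5 - 49 L_4^3 + 36 L_4; these identities are checked by
      computation on a coded representation of Z S_4 (permutations as lists of
      values, group ring elements as lists of (coefficient, code) pairs).  Hence
      every coefficient <w, F(a,b,c)> satisfies a linear recurrence in each of
      a, b and c.
   3. A function of (a,b,c) satisfying these three recurrences is determined by its
      values on the box [0,2) x [0,4) x [0,7) (recurrence3_unique).  Exponential
      sums whose bases are roots of the three characteristic polynomials satisfy
      the same recurrences; the bases needed are the content vectors of the ten
      standard Young tableaux of size 4.  So <w, F(a,b,c)> is such a sum as soon as
      both agree on the box, which is a finite computation (jm_coef_closed_form).
   4. Substituting (i,i,j), (i,j,i), (j,i,i) yields an exponential sum in (i,j).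
      For i, j >= 1 the terms with a zero base vanish, and two exponential sums
      agree when their coefficients agree base by base (expsum2_congr); comparing
      with the explicit sum of the statement is again a finite computation. *)

From HB Require Import structures.
From mathcomp Require Import all_boot all_order all_algebra all_fingroup ring.
From Stdlib Require Import FunctionalExtensionality.
Import GRing.Theory Num.Theory.
Local Open Scope ring_scope.

(* [recurrence c u]: u (n + d) = sum_{k < d} c_k u (n + k) for all n, where
   d = size c lists the lower coefficients of a monic characteristic polynomial. *)
Definition recurrence {R : comPzRingType} (c : seq R) (u : nat -> R) : Prop :=
  forall n, u (n + size c)%N = \sum_(0 <= k < size c) c`_k * u (n + k)%N.

Lemma recurrence_unique {R : comPzRingType} {c : seq R} {u v : nat -> R} :
  recurrence c u -> recurrence c v ->
  (forall n, (n < size c)%N -> u n = v n) -> u =1 v.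
Proof.
move=> ru rv init n; elim/ltn_ind: n => n IH.
have [/init //|le_cn] := ltnP n (size c).
rewrite -(subnK le_cn) ru rv; apply: eq_big_nat => k /andP[_ hk]; congr (_ * _).
by apply: IH; rewrite -[ltnRHS](subnK le_cn) ltn_add2l.
Qed.

Lemma recurrence3_unique {R : comPzRingType} (ca cb cc : seq R)
    (f g : nat -> nat -> nat -> R) :
  (forall b c, recurrence ca (fun a => f a b c)) ->
  (forall b c, recurrence ca (fun a => g a b c)) ->
  (forall a c, recurrence cb (fun b => f a b c)) ->
  (forall a c, recurrence cb (fun b => g a b c)) ->
  (forall a b, recurrence cc (f a b)) -> (forall a b, recurrence cc (g a b)) ->
  (forall a b c, (a < size ca)%N -> (b < size cb)%N -> (c < size cc)%N ->
     f a b c = g a b c) ->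
  forall a b c, f a b c = g a b c.
Proof.
move=> fa ga fb gb fc gc box.
have face b c a : (b < size cb)%N -> (c < size cc)%N -> f a b c = g a b c.
  by move=> hb hc; apply: (recurrence_unique (fa b c) (ga b c) _ a) => a' ha; apply: box.
have slab c a b : (c < size cc)%N -> f a b c = g a b c.
  by move=> hc; apply: (recurrence_unique (fb a c) (gb a c) _ b) => b' hb; apply: face.
by move=> a b c; apply: (recurrence_unique (fc a b) (gc a b) _ c) => c' hc; apply: slab.
Qed.

Lemma recurrence_rmorph {R S : comPzRingType} (f : {rmorphism R -> S})
    {c : seq R} {u : nat -> R} :
  recurrence c u -> recurrence (map f c) (f \o u).
Proof.
move=> ru n; rewrite size_map /= ru rmorph_sum.
by apply: eq_big_nat => k /andP[_ hk]; rewrite rmorphM (nth_map 0).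
Qed.

Definition expsum {R : comPzRingType} (K : seq (R * R)) (n : nat) : R :=
  \sum_(t <- K) t.1 * t.2 ^+ n.

Definition char_root {R : comPzRingType} (c : seq R) (x : R) : bool :=
  x ^+ size c == \sum_(0 <= k < size c) c`_k * x ^+ k.

Lemma expsum_recurrence {R : comPzRingType} (c : seq R) (K : seq (R * R)) :
  all (char_root c) (map snd K) -> recurrence c (expsum K).
Proof.
move=> /allP roots n; rewrite /expsum.
under [RHS]eq_bigr do rewrite mulr_sumr.
rewrite exchange_big /= big_seq [RHS]big_seq; apply: eq_bigr => t tK.
have /eqP root_t : char_root c t.2 by apply: roots; rewrite map_f.
rewrite exprD root_t !mulr_sumr; apply: eq_bigr => k _; rewrite exprD; ring.
Qed.

Definition expsum3 {R : comPzRingType} (K : seq (R * (R * R * R))) (a b c : nat) : R :=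
  \sum_(t <- K) t.1 * (t.2.1.1 ^+ a * t.2.1.2 ^+ b * t.2.2 ^+ c).

(* Freezing two variables turns expsum3 into an expsum in the third one. *)
Lemma expsum3_recurrence {R : comPzRingType} (c1 c2 c3 : seq R)
    (K : seq (R * (R * R * R))) :
  all (char_root c1) [seq t.2.1.1 | t <- K] ->
  all (char_root c2) [seq t.2.1.2 | t <- K] ->
  all (char_root c3) [seq t.2.2 | t <- K] ->
  [/\ forall b c, recurrence c1 (fun a => expsum3 K a b c),
      forall a c, recurrence c2 (fun b => expsum3 K a b c)
    & forall a b, recurrence c3 (expsum3 K a b)].
Proof.
move=> r1 r2 r3; split=> [b c|a c|a b].
- pose L := [seq (t.1 * (t.2.1.2 ^+ b * t.2.2 ^+ c), t.2.1.1) | t <- K].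
  have -> : (fun a => expsum3 K a b c) = expsum L.
    by apply: functional_extensionality => a; rewrite /expsum big_map;
      apply: eq_bigr => t _ /=; ring.
  by apply: expsum_recurrence; rewrite -map_comp.
- pose L := [seq (t.1 * (t.2.1.1 ^+ a * t.2.2 ^+ c), t.2.1.2) | t <- K].
  have -> : (fun b => expsum3 K a b c) = expsum L.
    by apply: functional_extensionality => b; rewrite /expsum big_map;
      apply: eq_bigr => t _ /=; ring.
  by apply: expsum_recurrence; rewrite -map_comp.
- pose L := [seq (t.1 * (t.2.1.1 ^+ a * t.2.1.2 ^+ b), t.2.2) | t <- K].
  have -> : expsum3 K a b = expsum L.
    by apply: functional_extensionality => c; rewrite /expsum big_map;
      apply: eq_bigr => t _ /=; ring.
  by apply: expsum_recurrence; rewrite -map_comp.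
Qed.

Lemma gmul_sumr (a : ZS4) (r : seq nat) (c : nat -> int) (b : nat -> ZS4) :
  gmul a (fun x => \sum_(k <- r) c k * b k x) = fun g => \sum_(k <- r) c k * gmul a (b k) g.
Proof.
apply: functional_extensionality => g; rewrite /gmul.
under eq_bigr do rewrite mulr_sumr.
rewrite exchange_big; apply: eq_bigr => k _; rewrite mulr_sumr.
by apply: eq_bigr => h _; ring.
Qed.

Lemma gmul_suml (a : ZS4) (r : seq nat) (c : nat -> int) (b : nat -> ZS4) :
  gmul (fun x => \sum_(k <- r) c k * b k x) a = fun g => \sum_(k <- r) c k * gmul (b k) a g.
Proof.
apply: functional_extensionality => g; rewrite /gmul.
under eq_bigr do rewrite mulr_suml.
rewrite exchange_big; apply: eq_bigr => k _; rewrite mulr_sumr.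
by apply: eq_bigr => h _; ring.
Qed.

Lemma gmul1l (a : ZS4) : gmul gone a = a.
Proof.
apply: functional_extensionality => g; rewrite /gmul (bigD1 1%g) //= big1 ?addr0.
  by rewrite /gone /gdelta eqxx mul1r invg1 mul1g.
by move=> h /negbTE h_neq1; rewrite /gone /gdelta h_neq1 mul0r.
Qed.

Lemma gmul0l (a : ZS4) : gmul (fun _ => 0) a = fun _ => 0.
Proof. by apply: functional_extensionality => g; rewrite /gmul big1 // => h _; rewrite mul0r. Qed.

Definition power_relation (c : seq int) (a : ZS4) : Prop :=
  forall g, gpow a (size c) g = \sum_(0 <= k < size c) c`_k * gpow a k g.

Lemma gpow_recurrence (c : seq int) (a : ZS4) : power_relation c a ->
  forall n, gpow a (n + size c) = fun g => \sum_(0 <= k < size c) c`_k * gpow a (n + k) g.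
Proof.
move=> rel; elim=> [|n IH]; apply: functional_extensionality => g.
  by rewrite add0n rel.
rewrite addSn [gpow a _.+1]/gpow iterS -/(gpow a _) IH gmul_sumr.
by apply: eq_bigr => k _; rewrite addSn.
Qed.

Definition triple_coef (x y z : ZS4) (w : S4) (a b c : nat) : int :=
  gmul (gpow x a) (gmul (gpow y b) (gpow z c)) w.

Lemma triple_coef_recurrence {x y z : ZS4} {cx cy cz : seq int} (w : S4) :
  power_relation cx x -> power_relation cy y -> power_relation cz z ->
  [/\ forall b c, recurrence cx (fun a => triple_coef x y z w a b c),
      forall a c, recurrence cy (fun b => triple_coef x y z w a b c)
    & forall a b, recurrence cz (triple_coef x y z w a b)].
Proof.
move=> /gpow_recurrence rx /gpow_recurrence ry /gpow_recurrence rz.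
split=> [b c|a c|a b] n; rewrite /triple_coef.
- by rewrite rx gmul_suml.
- by rewrite ry gmul_suml gmul_sumr.
- by rewrite rz gmul_sumr gmul_sumr.
Qed.

Definition fsum (l : seq (int * S4)) : ZS4 := fun g => \sum_(p <- l) p.1 * (g == p.2)%:R.

Definition fsum_mul (l1 l2 : seq (int * S4)) : seq (int * S4) :=
  [seq (p.1 * q.1, (p.2 * q.2)%g) | p <- l1, q <- l2].

Lemma gmul_fsum (l1 l2 : seq (int * S4)) : gmul (fsum l1) (fsum l2) = fsum (fsum_mul l1 l2).
Proof.
apply: functional_extensionality => g.
rewrite /gmul /fsum /fsum_mul big_allpairs_dep /=.
under [LHS]eq_bigr do rewrite big_distrl /=.
rewrite exchange_big /=; apply: eq_bigr => p _.
under [LHS]eq_bigr do rewrite big_distrr /=.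
rewrite exchange_big /=; apply: eq_bigr => q _.
rewrite (bigD1 p.2) //= big1 ?addr0; last first.
  by move=> h /negbTE h_neq; rewrite h_neq mulr0 mul0r.
rewrite eqxx mulr1 mulrA; congr (_ * _%:R).
case: eqP => [<-|ne]; first by rewrite mulKVg eqxx.
by case: eqP => // E; case: ne; rewrite E mulKg.
Qed.

Lemma gpow_fsum (l : seq (int * S4)) (n : nat) :
  gpow (fsum l) n = fsum (iter n (fsum_mul l) [:: (1, 1%g)]).
Proof.
elim: n => [|n IH].
  by apply: functional_extensionality => g; rewrite /fsum big_seq1 mul1r.
by rewrite /gpow iterS -/(gpow _ n) IH gmul_fsum.
Qed.

(* A permutation of 'I_4 is coded by the list of its values, which computes. *)
Definition code (g : S4) : seq nat := [seq val (g (inord m)) | m <- iota 0 4].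

Lemma nth_code (g : S4) (k : 'I_4) : nth 0%N (code g) k = val (g k).
Proof. by rewrite (nth_map 0%N) ?size_iota // nth_iota // add0n inord_val. Qed.

Lemma code_inj : injective code.
Proof. by move=> x y E; apply/permP => k; apply: val_inj; rewrite -!nth_code E. Qed.

(* Composition of permutations on codes: (x * y) k = y (x k). *)
Definition code_mul (s t : seq nat) : seq nat := [seq nth 0%N t (nth 0%N s m) | m <- iota 0 4].

Lemma codeM (x y : S4) : code (x * y)%g = code_mul (code x) (code y).
Proof.
rewrite /code_mul [code (x * y)%g]/code.
apply/eq_in_map => m; rewrite mem_iota add0n => /andP[_ hm].
have nth_m (g : S4) : nth 0%N (code g) m = val (g (inord m)) by rewrite -nth_code inordK.
by rewrite nth_m nth_code permM.
Qed.

Lemma code1 : code 1%g = iota 0 4.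
Proof.
rewrite /code -[RHS]map_id; apply/eq_in_map => m; rewrite mem_iota add0n => /andP[_ hm].
by rewrite perm1 /= inordK.
Qed.

Definition tcode (l k : nat) : seq nat :=
  [seq if m == l then k else if m == k then l else m | m <- iota 0 4].

Lemma code_tperm (l k : nat) : (l < 4)%N -> (k < 4)%N ->
  code (tperm (inord l) (inord k)) = tcode l k.
Proof.
move=> hl hk; rewrite /code /tcode; apply/eq_in_map => m; rewrite mem_iota add0n => /andP[_ hm].
have inord_eq n : (n < 4)%N -> ((inord m : 'I_4) == inord n) = (m == n).
  by move=> hn; rewrite -val_eqE /= !inordK.
rewrite permE /= inord_eq // inord_eq //.
by case: ifP => _; [|case: ifP => _]; rewrite inordK.
Qed.

Definition cval (L : seq (int * seq nat)) (s : seq nat) : int :=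
  \sum_(p <- L) p.1 * (s == p.2)%:R.

Definition cmul (L1 L2 : seq (int * seq nat)) : seq (int * seq nat) :=
  [seq (p.1 * q.1, code_mul p.2 q.2) | p <- L1, q <- L2].

Definition cpow (L : seq (int * seq nat)) (n : nat) : seq (int * seq nat) :=
  iter n (cmul L) [:: (1, iota 0 4)].

Definition coded (l : seq (int * S4)) : seq (int * seq nat) := [seq (p.1, code p.2) | p <- l].

Lemma fsum_cval (l : seq (int * S4)) (g : S4) : fsum l g = cval (coded l) (code g).
Proof.
rewrite /cval big_map; apply: eq_bigr => p _.
by rewrite (inj_eq code_inj).
Qed.

Lemma coded_mul (l1 l2 : seq (int * S4)) :
  coded (fsum_mul l1 l2) = cmul (coded l1) (coded l2).
Proof.
rewrite /coded /fsum_mul /cmul; elim: l1 => [|p l1 IH] //=.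
rewrite map_cat IH -!map_comp; congr (_ ++ _).
by apply: eq_map => q /=; rewrite codeM.
Qed.

Lemma coded_pow (l : seq (int * S4)) (n : nat) :
  coded (iter n (fsum_mul l) [:: (1, 1%g)]) = cpow (coded l) n.
Proof.
elim: n => [|n IH]; last by rewrite iterS coded_mul IH.
by rewrite /coded /= code1.
Qed.

Lemma cval_out (L : seq (int * seq nat)) (s : seq nat) : s \notin map snd L -> cval L s = 0.
Proof.
move=> s_out; rewrite /cval big1_seq // => p /andP[_ pL].
by case: eqP => [E|]; [case/negP: s_out; rewrite E map_f | rewrite mulr0].
Qed.

(* Two coded elements are equal once their coefficients agree on the codes that
   occur in them: this turns identities in Z S_4 into a finite computation. *)
Lemma cval_ext (L1 L2 : seq (int * seq nat)) :
  all (fun s => cval L1 s == cval L2 s) (undup (map snd (L1 ++ L2))) ->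
  forall s, cval L1 s = cval L2 s.
Proof.
move=> /allP agree s; have [s_in|] := boolP (s \in map snd (L1 ++ L2)).
  by apply/eqP/agree; rewrite mem_undup.
by rewrite map_cat mem_cat negb_or => /andP[s1 s2]; rewrite !cval_out.
Qed.

Definition lincomb (c : seq int) (L : nat -> seq (int * seq nat)) : seq (int * seq nat) :=
  flatten [seq [seq (c`_k * p.1, p.2) | p <- L k] | k <- iota 0 (size c)].

Lemma cval_lincomb (c : seq int) (L : nat -> seq (int * seq nat)) (s : seq nat) :
  cval (lincomb c L) s = \sum_(0 <= k < size c) c`_k * cval (L k) s.
Proof.
rewrite /cval /lincomb big_flatten big_map.
rewrite /index_iota subn0; apply: eq_bigr => k _; rewrite big_map mulr_sumr.
by apply: eq_bigr => p _; rewrite mulrA.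
Qed.

Definition jm_list (k : nat) : seq (int * S4) :=
  [seq (1, tperm (inord l) (inord k)) | l <- iota 0 k].

Lemma JM_fsum (k : nat) : (k < 4)%N -> JM (inord k) = fsum (jm_list k).
Proof.
move=> hk; apply: functional_extensionality => g.
rewrite /JM /fsum big_map inordK //.
have -> : iota 0 k = index_iota 0 k by rewrite /index_iota subn0.
rewrite big_mkord /= (big_ord_widen 4 (fun l => 1 * (g == tperm (inord l) (inord k))%:R) (ltnW hk)).
by apply: eq_bigr => l _; rewrite /gdelta inord_val mul1r.
Qed.

Definition jm_code (k : nat) : seq (int * seq nat) := [seq (1, tcode l k) | l <- iota 0 k].

Lemma coded_jm (k : nat) : (k < 4)%N -> coded (jm_list k) = jm_code k.
Proof.
move=> hk; rewrite /coded /jm_list /jm_code -map_comp; apply/eq_in_map => l.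
by rewrite mem_iota add0n => /andP[_ hl] /=; rewrite code_tperm // (ltn_trans hl hk).
Qed.

Lemma gpow_JM (k n : nat) (g : S4) : (k < 4)%N ->
  gpow (JM (inord k)) n g = cval (cpow (jm_code k) n) (code g).
Proof. by move=> hk; rewrite JM_fsum // gpow_fsum fsum_cval coded_pow coded_jm. Qed.

Lemma JM_power_relation (k : nat) (c : seq int) : (k < 4)%N ->
  all (fun s => cval (cpow (jm_code k) (size c)) s == cval (lincomb c (cpow (jm_code k))) s)
      (undup (map snd (cpow (jm_code k) (size c) ++ lincomb c (cpow (jm_code k))))) ->
  power_relation c (JM (inord k)).
Proof.
move=> hk check g; rewrite gpow_JM // (cval_ext _ _ check) cval_lincomb.
by apply: eq_bigr => n _; rewrite gpow_JM.
Qed.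

(* Annihilating polynomials of L_2, L_3, L_4, whose roots are the contents that
   can occur at positions 2, 3, 4: X^2 - 1, X^4 - 5X^2 + 4 and
   X^7 - 14X^5 + 49X^3 - 36X. *)
Definition rel_L2 : seq int := [:: 1; 0].
Definition rel_L3 : seq int := [:: -4; 0; 5; 0].
Definition rel_L4 : seq int := [:: 0; 36; 0; -49; 0; 14; 0].

Lemma L2_relation : power_relation rel_L2 (JM (inord 1)).
Proof. by apply: JM_power_relation => [//|]; rewrite /cval unlock; vm_compute. Qed.
Lemma L3_relation : power_relation rel_L3 (JM (inord 2)).
Proof. by apply: JM_power_relation => [//|]; rewrite /cval unlock; vm_compute. Qed.
Lemma L4_relation : power_relation rel_L4 (JM (inord 3)).
Proof. by apply: JM_power_relation => [//|]; rewrite /cval unlock; vm_compute. Qed.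

Definition jm_coef (w : S4) : nat -> nat -> nat -> int :=
  triple_coef (JM (inord 1)) (JM (inord 2)) (JM (inord 3)) w.

Lemma jm_coef_cval (w : S4) (a b c : nat) :
  jm_coef w a b c =
  cval (cmul (cpow (jm_code 1) a) (cmul (cpow (jm_code 2) b) (cpow (jm_code 3) c))) (code w).
Proof.
by rewrite /jm_coef /triple_coef !JM_fsum // !gpow_fsum !gmul_fsum fsum_cval
  !coded_mul !coded_pow !coded_jm.
Qed.

(* Content vectors (c(2), c(3), c(4)) of the ten standard Young tableaux of size 4. *)
Definition contents : seq (rat * rat * rat) :=
  [:: (1, -1, 0); (1, -1, 2); (1, -1, -2); (1, 2, -1); (1, 2, 3);
      (-1, 1, 0); (-1, 1, 2); (-1, 1, -2); (-1, -2, 1); (-1, -2, -3)].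

Lemma contents_roots :
  [/\ all (char_root (map intr rel_L2)) [seq t.1.1 | t <- contents],
      all (char_root (map intr rel_L3)) [seq t.1.2 | t <- contents]
    & all (char_root (map intr rel_L4)) [seq t.2 | t <- contents]].
Proof. by split; rewrite /char_root unlock; vm_compute. Qed.

Definition box_check (s : seq nat) (e : seq rat) : bool :=
  all (fun a => all (fun b => all (fun c =>
    (cval (cmul (cpow (jm_code 1) a) (cmul (cpow (jm_code 2) b) (cpow (jm_code 3) c))) s)%:~R
      == expsum3 (zip e contents) a b c)
  (iota 0 (size rel_L4))) (iota 0 (size rel_L3))) (iota 0 (size rel_L2)).

(* Closed form of <w, L_2^a L_3^b L_4^c>: by uniqueness of solutions of the
   recurrences, agreement on the box suffices. *)
Lemma jm_coef_closed_form (w : S4) (e : seq rat) :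
  size e = size contents -> box_check (code w) e ->
  forall a b c, (jm_coef w a b c)%:~R = expsum3 (zip e contents) a b c.
Proof.
move=> size_e box.
have [fa fb fc] := triple_coef_recurrence w L2_relation L3_relation L4_relation.
have keep_roots (T : Type) (f : rat * rat * rat -> T) :
    [seq f t.2 | t <- zip e contents] = [seq f t | t <- contents].
  by rewrite -[in RHS](@unzip2_zip _ _ e contents) ?size_e // -map_comp.
have [r2 r3 r4] := contents_roots.
have := @expsum3_recurrence _ (map intr rel_L2) (map intr rel_L3) (map intr rel_L4)
  (zip e contents).
rewrite (keep_roots _ (fun t => t.1.1)) (keep_roots _ (fun t => t.1.2)) (keep_roots _ snd).
move=> /(_ r2 r3 r4) [ga gb gc].
apply: (@recurrence3_unique _ _ _ _ (fun a b c => (jm_coef w a b c)%:~R)).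
- by move=> b c; apply: (recurrence_rmorph intr (fa b c)).
- exact: ga.
- by move=> a c; apply: (recurrence_rmorph intr (fb a c)).
- exact: gb.
- by move=> a b; apply: (recurrence_rmorph intr (fc a b)).
- exact: gc.
move=> a b c ha hb hc; rewrite jm_coef_cval; apply/eqP.
by move: box => /allP/(_ a); rewrite mem_iota ha => /(_ isT)/allP/(_ b);
  rewrite mem_iota hb => /(_ isT)/allP/(_ c); rewrite mem_iota hc => /(_ isT).
Qed.

(* Since L_1 = 0, a monomial vanishes unless its first exponent is 0. *)
Lemma JMmono_head (e : 'I_4 -> nat) (g : S4) :
  JMmono e g =
  if e (inord 0) == 0%N then jm_coef g (e (inord 1)) (e (inord 2)) (e (inord 3)) else 0.
Proof.
have L1_zero : JM (inord 0) = fun _ => 0.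
  by rewrite JM_fsum //; apply: functional_extensionality => h; rewrite /fsum big_nil.
rewrite /JMmono; case: (e (inord 0)) => [|n] /=; first by rewrite gmul1l.
by rewrite /gpow /= L1_zero !gmul0l.
Qed.

Lemma perm3_cases (i j x1 x2 x3 : nat) : i != j ->
  perm_eq [:: x1; x2; x3] [:: i; i; j] =
  ([:: x1; x2; x3] \in [:: [:: i; i; j]; [:: i; j; i]; [:: j; i; i]]).
Proof.
move=> hij; apply/idP/idP; last first.
  rewrite !inE => /or3P[] /eqP ->; first exact: perm_refl.
    by rewrite -[[:: i; j; i]]/(rot 1 [:: i; i; j]) perm_rot.
  by rewrite -[[:: j; i; i]]/(rot 2 [:: i; i; j]) perm_rot.
move=> hp; have mem x : x \in [:: x1; x2; x3] -> (x == i) || (x == j).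
  by rewrite (perm_mem hp) !inE orbA orbb.
have count_j := seq.permP hp (pred1 j).
have hji : (j == i) = false by rewrite eq_sym (negbTE hij).
move: (mem x1) (mem x2) (mem x3) count_j; rewrite !inE !eqxx ?orbT.
case/(_ isT)/orP => /eqP ->; case/(_ isT)/orP => /eqP ->; case/(_ isT)/orP => /eqP -> /=;
  by rewrite ?eqxx ?hji ?(negbTE hij) => /eqP //= _; rewrite !orbT.
Qed.

Lemma rearrangements_head0 (i j : nat) (s : seq nat) : i != j -> size s = 4%N ->
  (perm_eq s [:: i; i; j; 0%N] && (head 0%N s == 0%N)) =
  (s \in [:: [:: 0; i; i; j]; [:: 0; i; j; i]; [:: 0; j; i; i]]%N).
Proof.
move=> hij; case: s => [|[|x0] [|x1 [|x2 [|x3 [|]]]]] //= _; last first.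
  by rewrite andbF !inE !eqseq_cons.
rewrite andbT -[[:: i; i; j; 0%N]]/(rot 1 [:: 0%N; i; i; j]) perm_sym perm_rot perm_sym.
by rewrite perm_cons perm3_cases // !inE !eqseq_cons eqxx.
Qed.

(* Exponent vectors in msym are finite functions 'I_4 -> 'I_N.+1; they are
   determined by their row of values, which lets us sum over explicit lists. *)
Section Rows.
Variable N : nat.

Definition row (a : {ffun 'I_4 -> 'I_N.+1}) : seq nat := [seq val (a k) | k <- enum 'I_4].
Definition of_row (s : seq nat) : {ffun 'I_4 -> 'I_N.+1} :=
  [ffun k : 'I_4 => inord (nth 0%N s k)].

Lemma nth_row (a : {ffun 'I_4 -> 'I_N.+1}) (k : 'I_4) : nth 0%N (row a) k = val (a k).
Proof. by rewrite (nth_map k) ?size_enum_ord // nth_ord_enum. Qed.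

Lemma row_inj : injective row.
Proof. by move=> a b E; apply/ffunP => k; apply: val_inj; rewrite -!nth_row E. Qed.

Lemma row_of_row (s : seq nat) : size s = 4%N -> all (fun x => x <= N)%N s ->
  row (of_row s) = s.
Proof.
move=> size_s /allP bounded.
apply: (@eq_from_nth _ 0%N); first by rewrite size_map size_enum_ord.
move=> m; rewrite size_map size_enum_ord => hm.
rewrite -[m](@inordK 3) // nth_row ffunE /= (@inordK 3 m) // inordK //.
by rewrite ltnS bounded // mem_nth // size_s.
Qed.

Lemma sum_over_rows (E : seq (seq nat)) (F : seq nat -> int) :
  uniq E -> all (fun s => (size s == 4) && all (fun x => x <= N)%N s) E ->
  \sum_(a : {ffun 'I_4 -> 'I_N.+1} | row a \in E) F (row a) = \sum_(s <- E) F s.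
Proof.
move=> uniq_E /allP valid.
have rowK s : s \in E -> row (of_row s) = s.
  by move=> sE; have /andP[/eqP size_s bounded] := valid s sE; apply: row_of_row.
rewrite [RHS](eq_big_seq (fun s => F (row (of_row s)))); last by move=> s /rowK ->.
rewrite -(big_map of_row xpredT (fun a => F (row a))) big_uniq /=; last first.
  by rewrite map_inj_in_uniq // => s t /rowK {2}<- /rowK {2}<- ->.
apply: eq_bigl => a; apply/idP/mapP => [aE|[s sE ->]]; last by rewrite rowK.
by exists (row a) => //; apply: row_inj; rewrite rowK.
Qed.
End Rows.
Arguments row {N}.
Arguments of_row {N}.

Lemma msym_iij (i j : nat) (g : S4) : i != j ->
  msym [:: i; i; j] g = jm_coef g i i j + jm_coef g i j i + jm_coef g j i i.
Proof.
move=> hij; rewrite /msym /=; set N := maxn i _.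
pose F (s : seq nat) := if head 0%N s == 0%N
  then jm_coef g (nth 0%N s 1) (nth 0%N s 2) (nth 0%N s 3) else 0.
have row_at (a : {ffun 'I_4 -> 'I_N.+1}) m : (m < 4)%N -> val (a (inord m)) = nth 0%N (row a) m.
  by move=> hm; rewrite -[in RHS](@inordK 3 m) // nth_row.
rewrite (eq_bigr (fun a => F (row a))) => [|a _]; last first.
  by rewrite JMmono_head /F !row_at.
rewrite (bigID (fun a => head 0%N (row a) == 0%N)) /= [X in _ + X]big1 ?addr0; last first.
  by move=> a /andP[_ /negbTE head_a]; rewrite /F head_a.
rewrite (eq_bigl (fun a => row a \in [:: [:: 0; i; i; j]; [:: 0; i; j; i]; [:: 0; j; i; i]]%N)).
  rewrite sum_over_rows; last by rewrite /= !leq_max !leqnn !orbT.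
    by rewrite !big_cons big_nil /F /= addr0 addrA.
  have hji : (j == i) = false by rewrite eq_sym (negbTE hij).
  by rewrite /= !inE !eqseq_cons !eqxx (negbTE hij) hji.
by move=> a; rewrite -rearrangements_head0 // size_map size_enum_ord.
Qed.

Definition expsum2 {R : comPzRingType} (l : seq (R * (R * R))) (i j : nat) : R :=
  \sum_(t <- l) t.1 * (t.2.1 ^+ i * t.2.2 ^+ j).

Definition iij_terms {R : comPzRingType} (K : seq (R * (R * R * R))) : seq (R * (R * R)) :=
  [seq (t.1, (t.2.1.1 * t.2.1.2, t.2.2)) | t <- K] ++
  [seq (t.1, (t.2.1.1 * t.2.2, t.2.1.2)) | t <- K] ++
  [seq (t.1, (t.2.1.2 * t.2.2, t.2.1.1)) | t <- K].

Lemma expsum3_iij {R : comPzRingType} (K : seq (R * (R * R * R))) (i j : nat) :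
  expsum3 K i i j + expsum3 K i j i + expsum3 K j i i = expsum2 (iij_terms K) i j.
Proof.
rewrite /expsum2 !big_cat !big_map -addrA /expsum3.
by congr (_ + (_ + _)); apply: eq_bigr => t _ /=; rewrite !exprMn; ring.
Qed.

Definition weight {R : comPzRingType} (l : seq (R * (R * R))) (b : R * R) : R :=
  \sum_(t <- l) (t.2 == b)%:R * t.1.

Lemma expsum2_weights {R : comPzRingType} (l : seq (R * (R * R))) (S : seq (R * R))
    (i j : nat) :
  uniq S -> {subset map snd l <= S} ->
  expsum2 l i j = \sum_(b <- S) weight l b * (b.1 ^+ i * b.2 ^+ j).
Proof.
move=> uniq_S l_in_S; under [RHS]eq_bigr do rewrite /weight mulr_suml.
rewrite exchange_big /expsum2 big_seq [RHS]big_seq; apply: eq_bigr => t tl.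
have tS : t.2 \in S by apply: l_in_S; rewrite map_f.
rewrite (bigD1_seq t.2) //= eqxx mul1r big1 ?addr0 // => b /negbTE t_neq_b.
by rewrite eq_sym t_neq_b mul0r mul0r.
Qed.

(* For positive exponents, terms with a zero base vanish; two exponential sums
   agree when their coefficients agree at every nonzero base. *)
Lemma expsum2_congr {R : comPzRingType} (l1 l2 : seq (R * (R * R))) (i j : nat) :
  (0 < i)%N -> (0 < j)%N ->
  all (fun b => [|| b.1 == 0, b.2 == 0 | weight l1 b == weight l2 b])
      (undup (map snd (l1 ++ l2))) ->
  expsum2 l1 i j = expsum2 l2 i j.
Proof.
move=> i_gt0 j_gt0; set S := undup _ => /allP agree.
have in_S l : {subset l <= l1 ++ l2} -> {subset map snd l <= S}.
  by move=> sub _ /mapP[t tl ->]; rewrite mem_undup map_f // sub.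
have sub1 : {subset map snd l1 <= S} by apply: in_S => t; rewrite mem_cat => ->.
have sub2 : {subset map snd l2 <= S} by apply: in_S => t; rewrite mem_cat orbC => ->.
rewrite (expsum2_weights l1 S) ?undup_uniq // (expsum2_weights l2 S) ?undup_uniq //.
apply: eq_big_seq => b /agree /or3P[] /eqP b0; last by rewrite b0.
- by rewrite b0 expr0n (negbTE (lt0n_neq0 i_gt0)) !mul0r !mulr0.
- by rewrite b0 expr0n (negbTE (lt0n_neq0 j_gt0)) !mulr0.
Qed.

(* The exponential sum of the statement, with parameters s = +-1 (parity factor),
   a (coefficient of B) and b (coefficient of 2^i). *)
Definition closed_terms (s a b : rat) : seq (rat * (rat * rat)) :=
  let c := 24^-1 in
  [:: (c, (6, 1)); (c, (2, 3)); (c, (3, 2)); (a * c, (-2, 1)); (a * c, (-1, 2)); (b * c, (2, 1));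
      (s * c, (6, -1)); (s * c, (2, -3)); (s * c, (3, -2)); (s * a * c, (-2, -1));
      (s * a * c, (-1, -2)); (s * b * c, (2, -1))].

Lemma expsum2_closed_terms (s a b : rat) (i j : nat) :
  expsum2 (closed_terms s a b) i j =
  24^-1 * ((1 + s * (-1) ^+ j) * (6 ^+ i + 2 ^+ i * 3 ^+ j + 2 ^+ j * 3 ^+ i
     + a * ((-1) ^+ i * (2 ^+ i + 2 ^+ j)) + b * 2 ^+ i)).
Proof.
rewrite /expsum2 !big_cons big_nil /= !(exprNn 2) !(exprNn 3) !expr1n.
have -> : (6 : rat) = 2 * 3 by [].
rewrite !exprMn; ring.
Qed.

Definition msym_check (w : S4) (e : seq rat) (s a b : rat) : bool :=
  [&& size e == size contents, box_check (code w) e &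
    all (fun t => [|| t.1 == 0, t.2 == 0 |
                   weight (iij_terms (zip e contents)) t == weight (closed_terms s a b) t])
        (undup (map snd (iij_terms (zip e contents) ++ closed_terms s a b)))].

Lemma msym_iij_closed_form {w : S4} {e : seq rat} {s a b : rat} (i j : nat) :
  msym_check w e s a b -> (0 < i)%N -> (0 < j)%N -> i != j ->
  (coef w (msym [:: i; i; j]))%:~R = expsum2 (closed_terms s a b) i j.
Proof.
move=> /and3P[/eqP size_e box weights] i_gt0 j_gt0 hij.
rewrite /coef msym_iij // !intrD !(jm_coef_closed_form _ _ size_e box) expsum3_iij.
exact: expsum2_congr.
Qed.

Definition weights_id : seq rat :=
  [:: 1/12; 1/8; 1/8; 1/8; 1/24; 1/12; 1/8; 1/8; 1/8; 1/24].
Definition weights_s1 : seq rat :=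
  [:: 1/12; 1/8; 1/8; 1/8; 1/24; -1/12; -1/8; -1/8; -1/8; -1/24].
Definition weights_s12 : seq rat :=
  [:: -1/24; -1/16; -1/16; 1/8; 1/24; -1/24; -1/16; -1/16; 1/8; 1/24].
Definition weights_s13 : seq rat :=
  [:: 1/12; 1/24; -1/8; -1/24; 1/24; 1/12; -1/8; 1/24; -1/24; 1/24].
Definition weights_s123 : seq rat :=
  [:: -1/24; -1/48; 1/16; -1/24; 1/24; 1/24; -1/16; 1/48; 1/24; -1/24].

Lemma check_id : msym_check 1%g weights_id 1 9 9.
Proof. by rewrite /msym_check code1 /box_check /weight /cval /expsum3 unlock; vm_compute. Qed.

Lemma check_s1 : msym_check s1 weights_s1 (-1) 3 (-3).
Proof.
by rewrite /msym_check /s1 code_tperm // /box_check /weight /cval /expsum3 unlock; vm_compute.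
Qed.

Lemma check_s12 : msym_check s12 weights_s12 1 0 0.
Proof.
rewrite /msym_check /s12 /s1 /s2 codeM !code_tperm //.
by rewrite /box_check /weight /cval /expsum3 unlock; vm_compute.
Qed.

Lemma check_s13 : msym_check s13 weights_s13 1 (-3) (-3).
Proof.
rewrite /msym_check /s13 /s1 /s3 codeM !code_tperm //.
by rewrite /box_check /weight /cval /expsum3 unlock; vm_compute.
Qed.

Lemma check_s123 : msym_check s123 weights_s123 (-1) (-3) 3.
Proof.
rewrite /msym_check /s123 /s1 /s2 /s3 !codeM !code_tperm //.
by rewrite /box_check /weight /cval /expsum3 unlock; vm_compute.
Qed.

Theorem proposition2p5 (i j : nat) (hi : (1 <= i)%N) (hj : (1 <= j)%N) (hij : i != j) :
  let m := msym [:: i; i; j] in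
  let A : rat := 6 ^+ i + 2 ^+ i * 3 ^+ j + 2 ^+ j * 3 ^+ i in
  let B : rat := (-1) ^+ i * (2 ^+ i + 2 ^+ j) in
  [/\ (coef 1%g m)%:~R = 24^-1 * ((1 + (-1) ^+ j) * (A + 9 * B + 9 * 2 ^+ i)),
      (coef s1 m)%:~R = 24^-1 * ((1 - (-1) ^+ j) * (A + 3 * B - 3 * 2 ^+ i)),
      (coef s12 m)%:~R = 24^-1 * ((1 + (-1) ^+ j) * A),
      (coef s13 m)%:~R = 24^-1 * ((1 + (-1) ^+ j) * (A - 3 * B - 3 * 2 ^+ i))
    & (coef s123 m)%:~R = 24^-1 * ((1 - (-1) ^+ j) * (A - 3 * B + 3 * 2 ^+ i))].
Proof.
move=> m A B.
have closed_form w e s a b : msym_check w e s a b ->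
    (coef w m)%:~R = 24^-1 * ((1 + s * (-1) ^+ j) * (A + a * B + b * 2 ^+ i)).
  by move=> chk; rewrite /m (msym_iij_closed_form i j chk) // expsum2_closed_terms.
split.
- by rewrite (closed_form _ _ _ _ _ check_id); ring.
- by rewrite (closed_form _ _ _ _ _ check_s1); ring.
- by rewrite (closed_form _ _ _ _ _ check_s12); ring.
- by rewrite (closed_form _ _ _ _ _ check_s13); ring.
- by rewrite (closed_form _ _ _ _ _ check_s123); ring.
Qed.
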